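(* Let $p\ge1$, let $A:\mathbb{R}\to\mathbb{R}$, and let $\boldsymbol{x},\boldsymbol{w}\in\mathbb{R}^p$ be such that $x_jw_j\neq0$ for some $j$. For $\tau\in(0,1)$ and $c\in(0,+\infty)$ define $\theta=\boldsymbol{w}^T\boldsymbol{x}$, $s_j=\mathrm{sgn}(w_j)$ (with $\mathrm{sgn}(0)=0$), $q_j=x_j(w_j+cs_j)$, $\theta_{j-}=\theta-q_j$, $\theta_{j+}=\theta+\frac{\tau}{1-\tau}q_j$, and $$\pi(\boldsymbol{w})=\pi_{\tau,c}(\boldsymbol{w})=\tau\sum_{j=1}^{p}A(\theta_{j-})+(1-\tau)\sum_{j=1}^{p}A(\theta_{j+})-pA(\theta).$$ Then: (i) if $A$ is convex, $\pi(\boldsymbol{w})$ is monotonically increasing as a function of $\tau\in(0,1)$ (for fixed $c$); (ii) if $A$ is twice differentiable with $A''(\theta)>0$ for all $\theta$, then $\pi(\boldsymbol{w})$ is monotonically increasing as a function of $c\in(0,+\infty)$ (for fixed $\tau$).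
   Context: $\pi$ is the Shakeout regularizer of a generalized linear model with log-partition function $A$, Shakeout hyper-parameters $\tau$ and $c$, and feature vector $\boldsymbol{x}$. *)

From Stdlib Require Import Reals.
From Coquelicot Require Import Coquelicot.
Open Scope R_scope.

Definition sgn (t : R) : R :=
  if Rlt_dec 0 t then 1 else if Rlt_dec t 0 then -1 else 0.

Definition convex_fun (A : R -> R) : Prop :=
  forall (a b t : R), 0 <= t <= 1 ->
    A (t * a + (1 - t) * b) <= t * A a + (1 - t) * A b.

(* vectors in R^p are functions nat -> R, coordinates j = 0, ..., p-1;
   sum over j = 0..p-1 (for p >= 1) is sum_f_R0 f (p - 1) *)
Definition sum_p (p : nat) (f : nat -> R) : R := sum_f_R0 f (p - 1).

Definition theta (p : nat) (x w : nat -> R) : R := sum_p p (fun j => w j * x j).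

Definition qj (c : R) (x w : nat -> R) (j : nat) : R := x j * (w j + c * sgn (w j)).

Definition theta_minus (p : nat) (c : R) (x w : nat -> R) (j : nat) : R :=
  theta p x w - qj c x w j.

Definition theta_plus (p : nat) (tau c : R) (x w : nat -> R) (j : nat) : R :=
  theta p x w + tau / (1 - tau) * qj c x w j.

Definition shakeout_pi (A : R -> R) (p : nat) (tau c : R) (x w : nat -> R) : R :=
  tau * sum_p p (fun j => A (theta_minus p c x w j))
  + (1 - tau) * sum_p p (fun j => A (theta_plus p tau c x w j))
  - INR p * A (theta p x w).

(** Write [g(q) = tau A(theta - q) + (1 - tau) A(theta + tau/(1-tau) q)], so that
    [pi = sum_j g(q_j) - p A(theta)].  The two arguments of [A] in [g(q)] have
    [theta] as their [(tau, 1 - tau)]-barycentre, so Jensen gives [A(theta) <= g(q)],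
    strictly when [A] is strictly convex and [q <> 0].  Convexity of [A] along rays
    from [theta] then yields chord inequalities [g' <= k g + (1 - k) A(theta)] with
    [0 <= k <= 1], where [g'] is [g] at a smaller [tau] or at a shrunk argument
    [lambda q]; together with Jensen they give [g' <= g].  Shrinking [c] shrinks
    every [q_j] by the factor [(|w_j| + c1)/(|w_j| + c2) < 1], and [q_j <> 0] as
    soon as [x_j w_j <> 0], which makes the monotonicity in [c] strict. *)

From Stdlib Require Import Reals Lra Lia.
From Coquelicot Require Import Coquelicot.
Open Scope R_scope.

Definition strictly_convex_fun (A : R -> R) : Prop :=
  forall a b t, a <> b -> 0 < t < 1 ->
    A (t * a + (1 - t) * b) < t * A a + (1 - t) * A b.

Definition shakeout_term (A : R -> R) (th tau q : R) : R :=
  tau * A (th - q) + (1 - tau) * A (th + tau / (1 - tau) * q).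

Lemma strictly_convex_fun_convex A : strictly_convex_fun A -> convex_fun A.
Proof.
  intros HA a b t ht.
  destruct (Req_dec a b) as [<- | hab].
  { replace (t * a + (1 - t) * a) with a by ring. lra. }
  destruct (Req_dec t 0) as [-> | ht0].
  { replace (0 * a + (1 - 0) * b) with b by ring. lra. }
  destruct (Req_dec t 1) as [-> | ht1].
  { replace (1 * a + (1 - 1) * b) with a by ring. lra. }
  apply Rlt_le, HA; lra.
Qed.

Lemma convex_fun_ray A th s r : convex_fun A -> 0 <= r <= 1 ->
  A (th + r * s) <= r * A (th + s) + (1 - r) * A th.
Proof.
  intros HA hr. replace (th + r * s) with (r * (th + s) + (1 - r) * th) by ring.
  exact (HA _ _ _ hr).
Qed.

Lemma strictly_convex_fun_derive_incr A A' :
  (forall t, derivable_pt_lim A t (A' t)) ->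
  (forall s t, s < t -> A' s < A' t) ->
  strictly_convex_fun A.
Proof.
  intros hA hA'.
  assert (lt_case : forall a b t, a < b -> 0 < t < 1 ->
            A (t * a + (1 - t) * b) < t * A a + (1 - t) * A b).
  { intros a b t hab ht. set (m := t * a + (1 - t) * b).
    destruct (MVT_cor2 A A' a m ltac:(unfold m; nra) (fun s _ => hA s))
      as [s1 [E1 hs1]].
    destruct (MVT_cor2 A A' m b ltac:(unfold m; nra) (fun s _ => hA s))
      as [s2 [E2 hs2]].
    assert (hslope : A' s1 < A' s2) by (apply hA'; lra).
    assert (hgap : 0 < t * (1 - t) * (b - a) * (A' s2 - A' s1)).
    { repeat apply Rmult_lt_0_compat; lra. }
    replace (A a) with (A m - A' s1 * (m - a)) by lra.
    replace (A b) with (A m + A' s2 * (b - m)) by lra.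
    unfold m in *. nra. }
  intros a b t hab ht. destruct (Rlt_or_le a b) as [hlt | hge].
  - exact (lt_case a b t hlt ht).
  - replace (t * a + (1 - t) * b) with ((1 - t) * b + (1 - (1 - t)) * a) by ring.
    pose proof (lt_case b a (1 - t) ltac:(lra) ltac:(lra)). lra.
Qed.

Lemma Derive_incr_of_Derive2_pos A :
  (forall t, ex_derive (Derive A) t) -> (forall t, 0 < Derive (Derive A) t) ->
  forall s t, s < t -> Derive A s < Derive A t.
Proof.
  intros hd2 hpos s t hst.
  destruct (MVT_cor2 (Derive A) (Derive (Derive A)) s t hst) as [u [E _]].
  { intros u _. apply is_derive_Reals, Derive_correct, hd2. }
  pose proof (hpos u). nra.
Qed.

Lemma strictly_convex_fun_Derive2_pos A :
  (forall t, ex_derive A t) -> (forall t, ex_derive (Derive A) t) ->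
  (forall t, 0 < Derive (Derive A) t) -> strictly_convex_fun A.
Proof.
  intros hd1 hd2 hpos. apply strictly_convex_fun_derive_incr with (Derive A).
  - intros t. apply is_derive_Reals, Derive_correct, hd1.
  - exact (Derive_incr_of_Derive2_pos A hd2 hpos).
Qed.

Lemma shakeout_term_barycentre th tau q : 0 < tau < 1 ->
  tau * (th - q) + (1 - tau) * (th + tau / (1 - tau) * q) = th.
Proof. intros ht. field. lra. Qed.

Lemma shakeout_term_ge A th tau q : convex_fun A -> 0 < tau < 1 ->
  A th <= shakeout_term A th tau q.
Proof.
  intros HA ht. unfold shakeout_term.
  rewrite <- (shakeout_term_barycentre th tau q ht) at 1. apply HA. lra.
Qed.

Lemma shakeout_term_gt A th tau q : strictly_convex_fun A -> 0 < tau < 1 -> q <> 0 ->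
  A th < shakeout_term A th tau q.
Proof.
  intros HA ht hq. unfold shakeout_term.
  rewrite <- (shakeout_term_barycentre th tau q ht) at 1. apply HA; [|lra].
  assert (0 < tau / (1 - tau)) by (apply Rdiv_lt_0_compat; lra).
  intros E. apply hq. nra.
Qed.

Lemma shakeout_term_tau_chord A th tau1 tau2 q : convex_fun A ->
  0 < tau1 -> tau1 <= tau2 -> tau2 < 1 ->
  shakeout_term A th tau1 q <=
  tau1 / tau2 * shakeout_term A th tau2 q + (1 - tau1 / tau2) * A th.
Proof.
  intros HA h1 h12 h2. unfold shakeout_term.
  set (u1 := tau1 / (1 - tau1)). set (u2 := tau2 / (1 - tau2)).
  assert (hu : 0 < u1 <= u2).
  { unfold u1, u2. split; [apply Rdiv_lt_0_compat; lra|].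
    apply Rmult_le_compat; try lra.
    - apply Rlt_le, Rinv_0_lt_compat; lra.
    - apply Rinv_le_contravar; lra. }
  assert (hray : A (th + u1 / u2 * (u2 * q)) <=
                 u1 / u2 * A (th + u2 * q) + (1 - u1 / u2) * A th).
  { apply convex_fun_ray; [exact HA|]. split.
    - apply Rlt_le, Rdiv_lt_0_compat; lra.
    - apply Rmult_le_reg_r with u2; [lra|]. field_simplify; lra. }
  replace (u1 / u2 * (u2 * q)) with (u1 * q) in hray by (field; lra).
  assert (E1 : (1 - tau1) * (u1 / u2) = tau1 / tau2 * (1 - tau2))
    by (unfold u1, u2; field; lra).
  assert (E2 : (1 - tau1) * (1 - u1 / u2) = 1 - tau1 / tau2)
    by (unfold u1, u2; field; lra).
  assert (E3 : tau1 = tau1 / tau2 * tau2) by (field; lra).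
  apply Rmult_le_compat_l with (r := 1 - tau1) in hray; [|lra].
  rewrite Rmult_plus_distr_l, <- !Rmult_assoc, E1, E2 in hray.
  rewrite E3 at 1. lra.
Qed.

Lemma shakeout_term_le_tau A th tau1 tau2 q : convex_fun A ->
  0 < tau1 -> tau1 <= tau2 -> tau2 < 1 ->
  shakeout_term A th tau1 q <= shakeout_term A th tau2 q.
Proof.
  intros HA h1 h12 h2.
  pose proof (shakeout_term_tau_chord A th tau1 tau2 q HA h1 h12 h2).
  pose proof (shakeout_term_ge A th tau2 q HA ltac:(lra)).
  assert (tau1 / tau2 <= 1).
  { apply Rmult_le_reg_r with tau2; [lra|]. field_simplify; lra. }
  nra.
Qed.

Lemma shakeout_term_scale_chord A th tau q lam : convex_fun A ->
  0 < tau < 1 -> 0 <= lam <= 1 ->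
  shakeout_term A th tau (lam * q) <=
  lam * shakeout_term A th tau q + (1 - lam) * A th.
Proof.
  intros HA ht hl. unfold shakeout_term.
  pose proof (convex_fun_ray A th (- q) lam HA hl) as hminus.
  pose proof (convex_fun_ray A th (tau / (1 - tau) * q) lam HA hl) as hplus.
  replace (th + lam * - q) with (th - lam * q) in hminus by ring.
  replace (th + - q) with (th - q) in hminus by ring.
  replace (th + lam * (tau / (1 - tau) * q))
    with (th + tau / (1 - tau) * (lam * q)) in hplus by ring.
  nra.
Qed.

Lemma shakeout_term_le_scale A th tau q lam : convex_fun A ->
  0 < tau < 1 -> 0 <= lam <= 1 ->
  shakeout_term A th tau (lam * q) <= shakeout_term A th tau q.
Proof.
  intros HA ht hl.
  pose proof (shakeout_term_scale_chord A th tau q lam HA ht hl).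
  pose proof (shakeout_term_ge A th tau q HA ht). nra.
Qed.

Lemma shakeout_term_lt_scale A th tau q lam : strictly_convex_fun A ->
  0 < tau < 1 -> 0 <= lam < 1 -> q <> 0 ->
  shakeout_term A th tau (lam * q) < shakeout_term A th tau q.
Proof.
  intros HA ht hl hq.
  pose proof (shakeout_term_scale_chord A th tau q lam
                (strictly_convex_fun_convex A HA) ht ltac:(lra)).
  pose proof (shakeout_term_gt A th tau q HA ht hq). nra.
Qed.

Lemma sgn_eq0 t : sgn t = 0 -> t = 0.
Proof. unfold sgn. destruct (Rlt_dec 0 t); destruct (Rlt_dec t 0); lra. Qed.

Lemma add_scale_sgn t c : t + c * sgn t = sgn t * (Rabs t + c).
Proof.
  unfold sgn, Rabs. destruct (Rlt_dec 0 t); destruct (Rlt_dec t 0);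
    destruct (Rcase_abs t); lra.
Qed.

Lemma qj_scale c1 c2 x w j : 0 < c2 ->
  qj c1 x w j = (Rabs (w j) + c1) / (Rabs (w j) + c2) * qj c2 x w j.
Proof.
  intros hc2. pose proof (Rabs_pos (w j)).
  unfold qj. rewrite !add_scale_sgn. field. lra.
Qed.

Lemma qj_neq0 c x w j : 0 < c -> x j * w j <> 0 -> qj c x w j <> 0.
Proof.
  intros hc hxw. unfold qj. rewrite add_scale_sgn.
  pose proof (Rabs_pos (w j)).
  intros E. apply hxw.
  destruct (Rmult_integral _ _ E) as [-> | E']; [ring|].
  destruct (Rmult_integral _ _ E') as [E'' | ]; [|lra].
  rewrite (sgn_eq0 _ E''). ring.
Qed.

Lemma shakeout_pi_terms A p tau c x w :
  shakeout_pi A p tau c x w =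
  sum_p p (fun j => shakeout_term A (theta p x w) tau (qj c x w j))
  - INR p * A (theta p x w).
Proof.
  unfold shakeout_pi, sum_p, shakeout_term, theta_minus, theta_plus.
  rewrite plus_sum, !scal_sum. f_equal. f_equal; apply sum_eq; intros; ring.
Qed.

Lemma sum_f_R0_lt (f g : nat -> R) N :
  (forall n, (n <= N)%nat -> f n <= g n) ->
  (exists j, (j <= N)%nat /\ f j < g j) -> sum_f_R0 f N < sum_f_R0 g N.
Proof.
  induction N as [|N IH]; intros hle [j [hj hlt]]; simpl.
  - replace j with 0%nat in hlt by lia. exact hlt.
  - destruct (Nat.eq_dec j (S N)) as [-> | hjN].
    + apply Rplus_le_lt_compat; [apply sum_Rle; intros; apply hle; lia | exact hlt].
    + apply Rplus_lt_le_compat; [|apply hle; lia].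
      apply IH; [intros; apply hle; lia | exists j; split; [lia | exact hlt]].
Qed.

Theorem proposition3 (p : nat) (A : R -> R) (x w : nat -> R)
  (hp : (1 <= p)%nat)
  (hxw : exists j, (j < p)%nat /\ x j * w j <> 0) :
  (* (i) convex A: pi is nondecreasing in tau on (0,1), for every fixed c > 0 *)
  (convex_fun A ->
     forall c, 0 < c ->
     forall tau1 tau2, 0 < tau1 -> tau1 <= tau2 -> tau2 < 1 ->
       shakeout_pi A p tau1 c x w <= shakeout_pi A p tau2 c x w)
  /\
  (* (ii) A twice differentiable with A'' > 0: pi is strictly increasing in c on (0,+oo),
     for every fixed tau in (0,1) *)
  ((forall t, ex_derive A t) ->
   (forall t, ex_derive (Derive A) t) ->
   (forall t, 0 < Derive (Derive A) t) ->
     forall tau, 0 < tau < 1 ->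
     forall c1 c2, 0 < c1 -> c1 < c2 ->
       shakeout_pi A p tau c1 x w < shakeout_pi A p tau c2 x w).
Proof.
  split.
  - intros HA c _ tau1 tau2 h1 h12 h2. rewrite !shakeout_pi_terms.
    apply Rplus_le_compat_r, sum_Rle. intros j _.
    exact (shakeout_term_le_tau A _ _ _ _ HA h1 h12 h2).
  - intros hd1 hd2 hpos tau ht c1 c2 hc1 hc12.
    pose proof (strictly_convex_fun_Derive2_pos A hd1 hd2 hpos) as HA.
    assert (hlam : forall j, 0 <= (Rabs (w j) + c1) / (Rabs (w j) + c2) < 1).
    { intros j. pose proof (Rabs_pos (w j)). split.
      - apply Rlt_le, Rdiv_lt_0_compat; lra.
      - apply Rmult_lt_reg_r with (Rabs (w j) + c2); [lra|]. field_simplify; lra. }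
    rewrite !shakeout_pi_terms. apply Rplus_lt_compat_r, sum_f_R0_lt.
    + intros j _. rewrite (qj_scale c1 c2) by lra.
      apply shakeout_term_le_scale;
        [apply strictly_convex_fun_convex, HA | exact ht | pose proof (hlam j); lra].
    + destruct hxw as [j [hj hxwj]]. exists j. split; [lia|].
      rewrite (qj_scale c1 c2) by lra.
      apply shakeout_term_lt_scale; auto. apply qj_neq0; [lra | exact hxwj].
Qed.
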